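(* Let $n>2k$ be integers with $k\ge 2$, $X=\{1,\dots,n\}$, let $\mathcal F\subset\binom{X}{k}$ be a saturated intersecting family, $\mathcal B=\mathcal B(\mathcal F)$, and $t=\min\{|B|\colon B\in\mathcal B\}$, and assume $t\ge 2$. For $t\le \ell\le k$ let $\mathcal F_\ell$ be the set of $F\in\mathcal F$ with $\max\{|B|\colon B\in\mathcal B,\ B\subset F\}=\ell$, and let $$\mathcal I_\ell=\{F\cap F'\colon F\in\mathcal F_\ell,\ F'\in\mathcal F_t\cup\dots\cup\mathcal F_\ell\}.$$ Then for every $\ell$ with $t\le\ell\le k$ and $\tau(\mathcal B^{(\le\ell)})\ge 2$, $$|\mathcal I_\ell|\le (2^\ell-1)\,|\mathcal B^{(\ell)}|\sum_{0\le i\le k-\ell}\binom{n}{i} < 2^\ell\,\ell^2 k^{\ell-2}\sum_{0\le i\le k-\ell}\binom{n}{i}.$$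
   Context: $\binom{X}{k}$ is the family of $k$-subsets of $X$. A family is intersecting if any two of its members intersect. For $\mathcal G\subset 2^X$, $\mathcal T(\mathcal G):=\{T\subset X\colon |T|\le k,\ T\cap G\neq\emptyset \text{ for all } G\in\mathcal G\}$. An intersecting family $\mathcal F\subset\binom{X}{k}$ is saturated if for every $G\in\binom{X}{k}\setminus\mathcal F$ the family $\mathcal F\cup\{G\}$ is not intersecting. $\mathcal B(\mathcal F)$ denotes the family of inclusion-minimal members of $\mathcal T(\mathcal F)$. For a family $\mathcal H$, $\mathcal H^{(i)}:=\{H\in\mathcal H\colon |H|=i\}$ and $\mathcal H^{(\le \ell)}:=\bigcup_{i=1}^{\ell}\mathcal H^{(i)}$. The covering number $\tau(\mathcal H)$ is the minimum size of a set $T$ with $T\cap H\neq\emptyset$ for all $H\in\mathcal H$. *)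

(* Ground set X = {1,...,n} is modelled by 'I_n. *)
From mathcomp Require Import all_boot all_order.
Set Implicit Arguments. Unset Strict Implicit. Unset Printing Implicit Defensive.

Section Defs.
Variable n : nat.
Notation fam := {set {set 'I_n}}.

Definition k_uniform (k : nat) (F : fam) : Prop := forall A, A \in F -> #|A| = k.

Definition intersecting (F : fam) : Prop :=
  forall A B, A \in F -> B \in F -> A :&: B != set0.

Definition saturated (k : nat) (F : fam) : Prop :=
  [/\ k_uniform k F, intersecting F &
      forall G : {set 'I_n}, #|G| = k -> G \notin F -> ~ intersecting (G |: F)].

Definition Tfam (k : nat) (G : fam) : fam :=
  [set T : {set 'I_n} | (#|T| <= k) && [forall A in G, T :&: A != set0]].

Definition Bfam (k : nat) (F : fam) : fam :=
  [set T in Tfam k F | [forall T' in Tfam k F, (T' \subset T) ==> (T' == T)]].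

Definition layer (H : fam) (i : nat) : fam := [set A in H | #|A| == i].
Definition layer_le (H : fam) (l : nat) : fam :=
  [set A in H | (1 <= #|A|) && (#|A| <= l)].

(* covering number; if no transversal exists, the value is n.+1 (i.e. "infinite") *)
Definition is_cover (T : {set 'I_n}) (H : fam) : bool :=
  [forall A in H, T :&: A != set0].
Definition tau (H : fam) : nat :=
  \big[minn/n.+1]_(T : {set 'I_n} | is_cover T H) #|T|.

Definition Flev (k : nat) (F : fam) (l : nat) : fam :=
  [set A in F | \max_(B in Bfam k F | B \subset A) #|B| == l].

Definition Ifam (k : nat) (F : fam) (t l : nat) : fam :=
  [set A :&: A' | A in Flev k F l,
                  A' in \bigcup_(t <= j < l.+1) Flev k F j].
End Defs.

From mathcomp Require Import all_boot all_order zify.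
Set Implicit Arguments. Unset Strict Implicit. Unset Printing Implicit Defensive.

(* The first inequality is a decomposition argument: if F is in F_l it
   contains some B in B^(l), and then for every F' in F we can write
   F cap F' = (B cap F') u R with B cap F' a nonempty subset of B (B is a
   transversal of F) and R = (F cap F') \ B of size at most k - l.  Counting
   the choices of B, of the nonempty subset of B and of the small set R gives
   (2^l - 1) |B^(l)| sum_{i <= k-l} C(n,i).

   The second inequality reduces to |B^(l)| <= l^2 k^(l-2), proved by the
   classical branching argument: for S strictly inside some B in B(F), S is
   not a transversal, so some k-set A of F avoids S and every B containing S
   contains S + z for some z in A; by induction at most k^(l-|S|) members of
   B^(l) contain S.  Since B(F) is intersecting (saturation and n > 2k) and
   no single point covers B^(<=l) (tau >= 2), two branching steps from a fixed
   B0 in B^(l) give the bound l * l * k^(l-2). *)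

Lemma card_bigcup_le (I T : finType) (P : pred I) (A : I -> {set T}) :
  #|\bigcup_(i | P i) A i| <= \sum_(i | P i) #|A i|.
Proof.
apply: (@big_ind2 {set T} nat (fun U m => #|U| <= m) set0 (@setU T) 0 addn)
  => [|U1 m1 U2 m2 le1 le2|//].
- by rewrite cards0.
- exact: leq_trans (leq_card_setU U1 U2) (leq_add le1 le2).
Qed.

Lemma card_imset2_le (aT1 aT2 rT : finType) (f : aT1 -> aT2 -> rT)
    (A1 : {set aT1}) (A2 : {set aT2}) :
  #|f @2: (A1, A2)| <= #|A1| * #|A2|.
Proof. by rewrite curry_imset2X -cardsX leq_imset_card. Qed.

Lemma card_supsets_le_sum (T : finType) (C : {set {set T}}) (S A : {set T}) :
  (forall B, B \in C -> B :&: A != set0) ->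
  #|[set B in C | S \subset B]| <= \sum_(z in A) #|[set B in C | z |: S \subset B]|.
Proof.
move=> meetA; apply: leq_trans (card_bigcup_le _ _).
apply: subset_leq_card; apply/subsetP => B; rewrite inE => /andP[BC SB].
case/set0Pn: (meetA B BC) => z; rewrite inE => /andP[zB zA].
by apply/bigcupP; exists z => //; rewrite inE BC subUset sub1set zB SB.
Qed.

Lemma extend_subset (T : finType) (m : nat) (B C : {set T}) :
  B \subset C -> #|B| + m <= #|C| ->
  exists G : {set T}, [/\ B \subset G, G \subset C & #|G| = #|B| + m].
Proof.
elim: m B => [|m IH] B BC leBC; first by exists B; rewrite addn0.
have /properP[_ [x xC xB]] : B \proper C.
  by rewrite properEcard BC (leq_trans _ leBC) // addnS ltnS leq_addr.
have xBC : x |: B \subset C by rewrite subUset sub1set xC BC.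
have [|G [xBG GC cG]] := IH (x |: B) xBC; first by rewrite cardsU1 xB addSnnS.
exists G; split => //; first exact: subset_trans (subsetUr _ _) xBG.
by rewrite cG cardsU1 xB addSnnS.
Qed.

Lemma card_small_sets (n m : nat) :
  #|[set R : {set 'I_n} | #|R| <= m]| = \sum_(0 <= i < m.+1) 'C(n, i).
Proof.
elim: m => [|m IH].
  rewrite big_nat1 -[n in 'C(n, _)]card_ord -card_draws.
  by apply: eq_card => R; rewrite !inE leqn0.
have -> : [set R : {set 'I_n} | #|R| <= m.+1] =
    [set R : {set 'I_n} | #|R| <= m] :|: [set R : {set 'I_n} | #|R| == m.+1].
  by apply/setP => R; rewrite !inE leq_eqVlt ltnS orbC.
rewrite cardsU big_nat_recr //= -IH -[n in 'C(n, _)]card_ord -card_draws.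
have -> : [set R : {set 'I_n} | #|R| <= m]
            :&: [set R : {set 'I_n} | #|R| == m.+1] = set0.
  by apply/setP => R; rewrite !inE; case: eqP => [->|]; rewrite ?ltnn ?andbF.
by rewrite cards0 subn0.
Qed.

Lemma tau_gt_not_cover (n : nat) (H : {set {set 'I_n}}) (T : {set 'I_n}) :
  #|T| < tau H -> exists2 A, A \in H & T :&: A = set0.
Proof.
move=> ltT; have : ~~ is_cover T H.
  apply: contraTN ltT => coverT; rewrite -leqNgt /tau -minEnat.
  exact: (@Order.TotalTheory.bigmin_le_cond _ _ _ n.+1 T _ (fun A : {set 'I_n} => #|A|) coverT).
by case/forall_inPn => A AH /negPn /eqP TA; exists A.
Qed.

Section BlockingSets.
Variables (n k : nat) (F : {set {set 'I_n}}).

Lemma Bfam_card (B : {set 'I_n}) : B \in Bfam k F -> #|B| <= k.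
Proof. by rewrite !inE => /andP[/andP[]]. Qed.

Lemma Bfam_meet (B A : {set 'I_n}) : B \in Bfam k F -> A \in F -> B :&: A != set0.
Proof. by rewrite !inE => /andP[/andP[_ /forall_inP meetF] _]; apply: meetF. Qed.

Lemma Bfam_proper_avoid (B S : {set 'I_n}) :
  B \in Bfam k F -> S \proper B -> exists2 A, A \in F & S :&: A = set0.
Proof.
move=> BB ltSB; have cS : #|S| <= k := ltnW (leq_trans (proper_card ltSB) (Bfam_card BB)).
have : S \notin Tfam k F.
  move: BB; rewrite inE => /andP[_ /forall_inP minB]; apply/negP => /minB.
  by rewrite (proper_sub ltSB) => /eqP eSB; rewrite eSB properxx in ltSB.
by rewrite inE cS /= => /forall_inPn [A AF /negPn /eqP SA]; exists A.
Qed.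

Lemma Flev_sub (j : nat) : Flev k F j \subset F.
Proof. by apply/subsetP => A; rewrite inE => /andP[]. Qed.

Lemma Flev_witness (l : nat) (A : {set 'I_n}) : 0 < l -> A \in Flev k F l ->
  exists2 B, B \in layer (Bfam k F) l & B \subset A.
Proof.
move=> l_gt0; rewrite inE => /andP[_].
apply: (@big_ind nat
  (fun m => m == l -> exists2 B, B \in layer (Bfam k F) l & B \subset A) 0 maxn)
  => [/eqP l0|m1 m2 ih1 ih2|B].
- by rewrite -l0 in l_gt0.
- by case: (leqP m1 m2) => _; [apply: ih2 | apply: ih1].
- by case/andP=> BB BA /eqP cB; exists B; rewrite // inE BB cB eqxx.
Qed.

Section Uniform.
Hypothesis unifF : k_uniform k F.

Lemma layer_supsets_card (l : nat) (S : {set 'I_n}) :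
  #|[set B in layer (Bfam k F) l | S \subset B]| <= k ^ (l - #|S|).
Proof.
move eqm : (l - #|S|) => m; elim: m S eqm => [|m IH] S eqm.
  rewrite expn0 -(cards1 S); apply: subset_leq_card; apply/subsetP => B.
  rewrite !inE => /andP[/andP[_ /eqP cB] SB].
  by apply/eqP/esym/eqP; rewrite eqEcard SB cB -subn_eq0 eqm.
case: (set_0Vmem [set B in layer (Bfam k F) l | S \subset B]) => [->|[B0]].
  by rewrite cards0.
rewrite inE => /andP[]; rewrite inE => /andP[B0B /eqP cB0] SB0.
have ltSB0 : S \proper B0 by rewrite properEcard SB0 cB0; lia.
have [A AF SA] := Bfam_proper_avoid B0B ltSB0.
have meetA B : B \in layer (Bfam k F) l -> B :&: A != set0.
  by rewrite inE => /andP[BB _]; apply: Bfam_meet AF.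
apply: leq_trans (card_supsets_le_sum S meetA) _.
apply: (@leq_trans (\sum_(z in A) k ^ m)); last first.
  by rewrite sum_nat_const (unifF AF) expnS.
apply: leq_sum => z zA; apply: IH.
have zS : z \notin S.
  by apply: contra_eqN SA => zS; apply/set0Pn; exists z; rewrite inE zS zA.
by rewrite cardsU1 zS; lia.
Qed.

Lemma Ifam_decomp (t l : nat) (X : {set 'I_n}) : 0 < l -> X \in Ifam k F t l ->
  exists B, exists S, exists R : {set 'I_n},
    [/\ B \in layer (Bfam k F) l, S \in powerset B :\ set0, #|R| <= k - l
      & X = S :|: R].
Proof.
move=> l_gt0 /imset2P [A A' AFl A'Fj ->].
have [B Bl BA] := Flev_witness l_gt0 AFl.
have A'F : A' \in F.
  apply: (subsetP _ _ A'Fj); elim/big_ind: _ => [|U V sUF sVF|j _].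
  - exact: sub0set.
  - by rewrite subUset sUF sVF.
  - exact: Flev_sub.
have AF := subsetP (Flev_sub l) A AFl.
move: (Bl); rewrite inE => /andP[BB /eqP cB].
exists B, (B :&: A'), ((A :&: A') :\: B); split => //.
- by rewrite !inE (Bfam_meet BB A'F) subsetIl.
- apply: leq_trans (_ : #|A :\: B| <= _).
    by apply: subset_leq_card; apply: setSD; apply: subsetIl.
  by rewrite cardsDS // unifF // cB.
- apply/setP => x; rewrite !inE.
  by case: (boolP (x \in B)) => xB //=; rewrite (subsetP BA x xB) orbF.
Qed.

Lemma Ifam_card_le (t l : nat) : 0 < l ->
  #|Ifam k F t l| <=
    (2 ^ l - 1) * #|layer (Bfam k F) l| * \sum_(0 <= i < (k - l).+1) 'C(n, i).
Proof.
move=> l_gt0; set small := [set R : {set 'I_n} | #|R| <= k - l].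
have IF_sub : Ifam k F t l \subset
    \bigcup_(B in layer (Bfam k F) l) [set S :|: R | S in powerset B :\ set0, R in small].
  apply/subsetP => X /(Ifam_decomp l_gt0) [B [S [R [Bl SB cR ->]]]].
  by apply/bigcupP; exists B => //; apply: imset2_f; rewrite // inE.
apply: leq_trans (subset_leq_card IF_sub) _.
apply: leq_trans (card_bigcup_le _ _) _.
apply: (@leq_trans (\sum_(B in layer (Bfam k F) l) ((2 ^ l - 1) * #|small|))).
  2: by rewrite sum_nat_const card_small_sets mulnA [#|_| * _]mulnC.
apply: leq_sum => B; rewrite inE => /andP[_ /eqP cB].
apply: leq_trans (card_imset2_le _ _ _) _.
rewrite leq_mul2r; apply/orP; right.
have := cardsD1 set0 (powerset B).
by rewrite card_powerset cB inE sub0set add1n => ->; rewrite subn1.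
Qed.
End Uniform.

Section Saturated.
Hypotheses (k_gt0 : 0 < k) (nk : 2 * k < n) (satF : saturated k F).

(* B(F) is intersecting: two disjoint members B1, B2 would let us extend B1
   to a k-set G outside B2, and G could be added to F. *)
Lemma Bfam_intersecting (B1 B2 : {set 'I_n}) :
  B1 \in Bfam k F -> B2 \in Bfam k F -> B1 :&: B2 != set0.
Proof.
have [unifF interF maxF] := satF.
move=> B1B B2B; apply/negP => /eqP disj.
have B1_sub : B1 \subset ~: B2 by rewrite -disjoints_subset -setI_eq0 disj.
have c1 := Bfam_card B1B; have c2 := Bfam_card B2B.
have [|G [B1G GB2 cG]] := extend_subset (m := k - #|B1|) B1_sub.
  by rewrite subnKC // cardsCs setCK card_ord; lia.
rewrite subnKC // in cG.
have meetG A : A \in F -> G :&: A != set0.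
  move=> AF; case/set0Pn: (Bfam_meet B1B AF) => x; rewrite inE => /andP[xB1 xA].
  by apply/set0Pn; exists x; rewrite inE xA (subsetP B1G x xB1).
have GF : G \notin F.
  apply/negP => GF; case/set0Pn: (Bfam_meet B2B GF) => x; rewrite inE.
  by case/andP=> xB2 /(subsetP GB2); rewrite inE xB2.
apply: (maxF G cG GF) => A A'; rewrite !inE => /orP[/eqP->|AF] /orP[/eqP->|A'F].
- by rewrite setIid -card_gt0 cG.
- exact: meetG.
- by rewrite setIC; apply: meetG.
- exact: interF.
Qed.

(* If no point covers B^(<=l), each point lies in at most l k^(l-2)
   members of B^(l): branch once over a member of B^(<=l) avoiding it. *)
Lemma layer_point_card (l : nat) (x : 'I_n) :
  2 <= tau (layer_le (Bfam k F) l) ->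
  #|[set B in layer (Bfam k F) l | [set x] \subset B]| <= l * k ^ (l - 2).
Proof.
have [unifF _ _] := satF.
move=> tau2; have [|B1 B1l xB1] := @tau_gt_not_cover n (layer_le (Bfam k F) l) [set x].
  by rewrite cards1.
move: B1l; rewrite inE => /andP[B1B /andP[_ cB1]].
have meetB1 B : B \in layer (Bfam k F) l -> B :&: B1 != set0.
  by rewrite inE => /andP[BB _]; apply: Bfam_intersecting.
apply: leq_trans (card_supsets_le_sum _ meetB1) _.
apply: (@leq_trans (\sum_(y in B1) k ^ (l - 2))); last first.
  by rewrite sum_nat_const leq_mul2r cB1 orbT.
apply: leq_sum => y yB1; apply: leq_trans (layer_supsets_card unifF _ _) _.
have yx : y != x.
  apply: contra_eqN xB1 => /eqP yx; apply/set0Pn.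
  by exists x; rewrite !inE eqxx -yx yB1.
by rewrite cardsU1 cards1 in_set1 yx.
Qed.

(* |B^(l)| <= l^2 k^(l-2): every member of B^(l) meets a fixed B0 in B^(l). *)
Lemma layer_card_le (l : nat) :
  2 <= tau (layer_le (Bfam k F) l) -> #|layer (Bfam k F) l| <= l * l * k ^ (l - 2).
Proof.
move=> tau2.
case: (set_0Vmem (layer (Bfam k F) l)) => [->|[B0 B0l]]; first by rewrite cards0.
move: (B0l); rewrite inE => /andP[B0B /eqP cB0].
have meetB0 B : B \in layer (Bfam k F) l -> B :&: B0 != set0.
  by rewrite inE => /andP[BB _]; apply: Bfam_intersecting.
have -> : layer (Bfam k F) l = [set B in layer (Bfam k F) l | set0 \subset B].
  by apply/setP => B; rewrite inE sub0set andbT.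
apply: leq_trans (card_supsets_le_sum _ meetB0) _.
under eq_bigr => x _ do rewrite setU0.
apply: (@leq_trans (\sum_(x in B0) l * k ^ (l - 2))).
  by apply: leq_sum => x _; apply: layer_point_card.
by rewrite sum_nat_const cB0 mulnA.
Qed.
End Saturated.
End BlockingSets.

Theorem lemma3p1 (n k : nat) (F : {set {set 'I_n}}) (t : nat) :
  2 <= k -> 2 * k < n ->
  saturated k F ->
  (* t = min{|B| : B in B(F)} *)
  (exists2 B, B \in Bfam k F & #|B| = t) ->
  (forall B, B \in Bfam k F -> t <= #|B|) ->
  2 <= t ->
  forall l : nat, t <= l -> l <= k ->
  2 <= tau (layer_le (Bfam k F) l) ->
  #|Ifam k F t l| <=
    (2 ^ l - 1) * #|layer (Bfam k F) l| * \sum_(0 <= i < (k - l).+1) 'C(n, i)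
  /\
  (2 ^ l - 1) * #|layer (Bfam k F) l| * \sum_(0 <= i < (k - l).+1) 'C(n, i)
    < 2 ^ l * l ^ 2 * k ^ (l - 2) * \sum_(0 <= i < (k - l).+1) 'C(n, i).
Proof.
move=> k2 nk satF _ _ t2 l tl _ tau2.
have l_gt0 : 0 < l by lia.
split; first by apply: Ifam_card_le => //; case: satF.
set s := \sum_(0 <= i < (k - l).+1) 'C(n, i).
have s_gt0 : 0 < s by rewrite /s big_ltn // bin0.
have layer_bound := layer_card_le (ltnW k2) nk satF tau2.
have M_gt0 : 0 < l ^ 2 * k ^ (l - 2) by rewrite muln_gt0 !expn_gt0; lia.
apply: (@leq_ltn_trans ((2 ^ l - 1) * (l ^ 2 * k ^ (l - 2)) * s)).
  by rewrite leq_mul2r leq_mul2l -mulnn layer_bound !orbT.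
rewrite ltn_pmul2r // -mulnA ltn_pmul2r //.
by have := expn_gt0 2 l; lia.
Qed.
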